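(* There exists a natural number $n_0$ such that for every natural number $n\ge n_0$ there exists a self-adjoint projection $E\in M_n(\mathbb{C})$ such that $3n^{-1/2}(2E-I)$ is not an element of the closed convex hull $\mathcal{C}$ of the set $\{R\circ C: R,C\in M_n(\mathbb{C}),\ \|R\|_r\le1,\ \|C\|_c\le1\}$.
   Context: $R\circ C$ is the entrywise Schur product $(r_{ij}c_{ij})$; $I$ is the identity matrix. $\|R\|_r:=\max_i(\sum_j|r_{ij}|^2)^{1/2}$ and $\|C\|_c:=\max_j(\sum_i|c_{ij}|^2)^{1/2}$. *)

From mathcomp Require Import all_boot all_order all_algebra.
From mathcomp Require Import reals Rstruct.
From mathcomp Require Export complex.
Set Implicit Arguments. Unset Strict Implicit. Unset Printing Implicit Defensive.
Import Order.TTheory GRing.Theory Num.Theory.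
Local Open Scope ring_scope.

Notation RR := Rdefinitions.R.
Notation CC := (Rdefinitions.R[i]).

Definition cabs (z : CC) : RR := Normc.normc z.

Definition row_norm (n : nat) (M : 'M[CC]_n) : RR :=
  \big[Num.max/0]_(i < n) Num.sqrt (\sum_(j < n) cabs (M i j) ^+ 2).

Definition col_norm (n : nat) (M : 'M[CC]_n) : RR :=
  \big[Num.max/0]_(j < n) Num.sqrt (\sum_(i < n) cabs (M i j) ^+ 2).

Definition schur (n : nat) (A B : 'M[CC]_n) : 'M[CC]_n :=
  \matrix_(i, j) (A i j * B i j).

Definition schur_set (n : nat) (X : 'M[CC]_n) : Prop :=
  exists A B : 'M[CC]_n,
    row_norm A <= 1 /\ col_norm B <= 1 /\ X = schur A B.

Definition conv_hull (n : nat) (S : 'M[CC]_n -> Prop) (X : 'M[CC]_n) : Prop :=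
  exists (k : nat) (w : 'I_k -> RR) (P : 'I_k -> 'M[CC]_n),
    (forall i, 0 <= w i) /\ \sum_(i < k) w i = 1 /\
    (forall i, S (P i)) /\ X = \sum_(i < k) ((w i)%:C)%C *: P i.

(* topological closure in M_n(C) (finite-dimensional: all norms equivalent;
   we use the entrywise max norm) *)
Definition mx_closure (n : nat) (S : 'M[CC]_n -> Prop) (X : 'M[CC]_n) : Prop :=
  forall eps : RR, 0 < eps ->
    exists Y, S Y /\ forall i j, cabs (X i j - Y i j) < eps.

Definition calC (n : nat) : 'M[CC]_n -> Prop :=
  mx_closure (conv_hull (@schur_set n)).

Definition adjmx (n : nat) (E : 'M[CC]_n) : 'M[CC]_n := (map_mx (@conjc _) E)^T.

Definition sa_projection (n : nat) (E : 'M[CC]_n) : Prop :=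
  E *m E = E /\ adjmx E = E.

From mathcomp Require Import all_boot all_order all_algebra cyclic separable cyclotomic.
From mathcomp Require Import reals Rstruct complex ring lra.
Set Implicit Arguments. Unset Strict Implicit. Unset Printing Implicit Defensive.
Import Order.TTheory GRing.Theory Num.Theory.
Local Open Scope ring_scope.

(* Every matrix in the closed convex hull C has entrywise l1 norm at most n:
   by AM-GM |r_ij c_ij| <= (|r_ij|^2 + |c_ij|^2) / 2, which sums to at most n
   when ||R||_r, ||C||_c <= 1, and the bound survives convex combinations and
   limits.  For a primitive n-th root of unity w and a = (1 - i)/2, the matrix
   H_jk = a w^(jk) + conj(a) w^(-jk) is self-adjoint with H^2 = n I and
   |H_jk| <= 2, so its squared Frobenius norm n^2 is at most 2 l1(H).  Thus
   P = H / sqrt n is a self-adjoint unitary, E = (I + P)/2 is a projection with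
   2E - I = P, and l1(3 n^(-1/2) P) >= 3n/2 > n. *)

Lemma cabsE (z : CC) : (cabs z)%:C%C = `|z|.
Proof. by case: z. Qed.

Lemma cabs_le (z : CC) (r : RR) : (cabs z <= r) = (`|z| <= r%:C%C).
Proof. by rewrite -lecR cabsE. Qed.

Lemma cabs_ge0 (z : CC) : 0 <= cabs z.
Proof. by rewrite -ler0c cabsE normr_ge0. Qed.

Lemma cabsM (x y : CC) : cabs (x * y) = cabs x * cabs y.
Proof. by apply: complexI; rewrite rmorphM /= !cabsE normrM. Qed.

Lemma cabsD (x y : CC) : cabs (x + y) <= cabs x + cabs y.
Proof. by rewrite cabs_le rmorphD /= !cabsE ler_normD. Qed.

Lemma cabs_real (r : RR) : cabs r%:C%C = `|r|.
Proof. by apply: complexI; rewrite cabsE /= normc_def /= expr0n addr0 sqrtr_sqr. Qed.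

Lemma cabs_sqr (z : CC) : (cabs z ^+ 2)%:C%C = z * z^*%C.
Proof. by rewrite rmorphXn /= cabsE sqr_normc. Qed.

Section EntrywiseL1.
Variable n : nat.
Implicit Types X Y : 'M[CC]_n.

Definition mx_l1 X : RR := \sum_(i < n) \sum_(j < n) cabs (X i j).

Lemma mx_l10 : mx_l1 0 = 0.
Proof. by rewrite /mx_l1 big1 // => i _; rewrite big1 // => j _; rewrite mxE cabs_real normr0. Qed.

Lemma mx_l1D X Y : mx_l1 (X + Y) <= mx_l1 X + mx_l1 Y.
Proof.
rewrite /mx_l1 -big_split; apply: ler_sum => i _.
by rewrite -big_split; apply: ler_sum => j _; rewrite mxE cabsD.
Qed.

Lemma mx_l1Z (c : CC) X : mx_l1 (c *: X) = cabs c * mx_l1 X.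
Proof.
rewrite /mx_l1 mulr_sumr; apply: eq_bigr => i _.
by rewrite mulr_sumr; apply: eq_bigr => j _; rewrite mxE cabsM.
Qed.

Lemma mx_l1_sum k (F : 'I_k -> 'M[CC]_n) :
  mx_l1 (\sum_(t < k) F t) <= \sum_(t < k) mx_l1 (F t).
Proof.
apply: (big_ind2 (fun X r => mx_l1 X <= r)).
- by rewrite mx_l10.
- by move=> X1 r1 X2 r2 h1 h2; apply: le_trans (mx_l1D _ _) (lerD h1 h2).
- by move=> t _.
Qed.

Lemma mx_l1_le_entries X (b : RR) :
  (forall i j, cabs (X i j) <= b) -> mx_l1 X <= n%:R ^+ 2 * b.
Proof.
move=> Xb; apply: le_trans (_ : \sum_(i < n) \sum_(j < n) b <= _).
  by apply: ler_sum => i _; apply: ler_sum => j _.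
by rewrite !sumr_const !card_ord -mulrnA expr2 -natrM mulr_natl.
Qed.

Lemma sum_cabs_sqrE X :
  (\sum_(i < n) \sum_(j < n) cabs (X i j) ^+ 2)%:C%C = \tr (X *m adjmx X).
Proof.
rewrite rmorph_sum; apply: eq_bigr => i _.
rewrite rmorph_sum mxE; apply: eq_bigr => j _.
rewrite !mxE; exact: cabs_sqr.
Qed.

Lemma sum_cabs_sqr_le X (b : RR) : (forall i j, cabs (X i j) <= b) ->
  \sum_(i < n) \sum_(j < n) cabs (X i j) ^+ 2 <= b * mx_l1 X.
Proof.
move=> Xb; rewrite /mx_l1 mulr_sumr; apply: ler_sum => i _.
rewrite mulr_sumr; apply: ler_sum => j _.
by rewrite expr2 ler_wpM2r ?cabs_ge0.
Qed.

End EntrywiseL1.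

Section SchurHull.
Variable n : nat.
Implicit Types A B X : 'M[CC]_n.

Lemma row_sum_sqr_le1 A i :
  row_norm A <= 1 -> \sum_(j < n) cabs (A i j) ^+ 2 <= 1.
Proof.
move=> A1; have S0 : 0 <= \sum_(j < n) cabs (A i j) ^+ 2.
  by apply: sumr_ge0 => j _; apply: sqr_ge0.
rewrite -(sqr_sqrtr S0) expr_le1 ?sqrtr_ge0 //.
exact: le_trans (le_bigmax _ (fun i => Num.sqrt (\sum_(j < n) cabs (A i j) ^+ 2)) i) A1.
Qed.

Lemma col_norm_tr B : col_norm B = row_norm B^T.
Proof.
apply: eq_bigr => j _; congr Num.sqrt.
by apply: eq_bigr => i _; rewrite mxE.
Qed.

Lemma mx_l1_schur_le A B :
  row_norm A <= 1 -> col_norm B <= 1 -> mx_l1 (schur A B) <= n%:R.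
Proof.
move=> A1; rewrite col_norm_tr => B1.
have AMGM (i j : 'I_n) :
    2 * cabs (schur A B i j) <= cabs (A i j) ^+ 2 + cabs (B^T j i) ^+ 2.
  rewrite !mxE cabsM; have := sqr_ge0 (cabs (A i j) - cabs (B i j)).
  rewrite sqrrB; lra.
have sum_rows M : row_norm M <= 1 ->
    \sum_(i < n) \sum_(j < n) cabs (M i j) ^+ 2 <= n%:R.
  move=> M1; rewrite -[n in n%:R]card_ord -sumr_const.
  by apply: ler_sum => i _; apply: row_sum_sqr_le1.
suff : 2 * mx_l1 (schur A B) <= n%:R + n%:R by lra.
rewrite /mx_l1 mulr_sumr.
apply: le_trans (lerD (sum_rows _ A1) (sum_rows _ B1)).
rewrite [X in _ + X]exchange_big -big_split /=; apply: ler_sum => i _.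
by rewrite mulr_sumr -big_split; apply: ler_sum => j _; apply: AMGM.
Qed.

Lemma mx_l1_conv_hull_le (S : 'M[CC]_n -> Prop) (c : RR) X :
  (forall Y, S Y -> mx_l1 Y <= c) -> conv_hull S X -> mx_l1 X <= c.
Proof.
move=> Sc [k [w [P [w_ge0 [w1 [SP ->]]]]]].
apply: le_trans (mx_l1_sum _) _.
rewrite -[c]mul1r -w1 mulr_suml; apply: ler_sum => t _.
by rewrite mx_l1Z cabs_real ger0_norm // ler_wpM2l // Sc.
Qed.

Lemma mx_l1_closure_le (S : 'M[CC]_n -> Prop) (c : RR) X :
  (forall Y, S Y -> mx_l1 Y <= c) -> mx_closure S X -> mx_l1 X <= c.
Proof.
move=> Sc XS; apply/ler_addgt0Pr => e e_gt0.
have n2_gt0 : (0 : RR) < n%:R ^+ 2 + 1 by rewrite ltr_wpDl ?sqr_ge0.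
have [Y [SY XY]] := XS (e / (n%:R ^+ 2 + 1)) (divr_gt0 e_gt0 n2_gt0).
have -> : X = Y + (X - Y) by rewrite addrC subrK.
apply: le_trans (mx_l1D _ _) (lerD (Sc Y SY) _).
apply: le_trans (mx_l1_le_entries (b := e / (n%:R ^+ 2 + 1)) _) _.
  by move=> i j; rewrite !mxE ltW.
by rewrite mulrA ler_pdivrMr // mulrC ler_pM2l // lerDl.
Qed.

Lemma mx_l1_calC_le X : calC X -> mx_l1 X <= n%:R.
Proof.
apply: mx_l1_closure_le => Y; apply: mx_l1_conv_hull_le => _ [A [B [A1 [B1 ->]]]].
exact: mx_l1_schur_le.
Qed.

End SchurHull.

Lemma num_closed_prim_root_exists (C : numClosedFieldType) n :
  (0 < n)%N -> exists z : C, n.-primitive_root z.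
Proof.
move=> n_gt0; have [r Dp] := closed_field_poly_normal ('X^n - 1 : {poly C}).
rewrite (monicP _) ?monicXnsubC // scale1r in Dp.
have rn1 : all n.-unity_root r by apply/allP=> z; rewrite -root_prod_XsubC -Dp.
have sz_r : (n < (size r).+1)%N.
  by rewrite -(size_prod_XsubC r id) -Dp size_XnsubC.
have [|z] := hasP (has_prim_root n_gt0 rn1 _ sz_r); last by exists z.
by rewrite -separable_prod_XsubC -Dp separable_Xn_sub_1 // pnatr_eq0 -lt0n.
Qed.

Lemma sum_expr_unity (F : idomainType) n (z : F) :
  z ^+ n = 1 -> \sum_(k < n) z ^+ k = if z == 1 then n%:R else 0.
Proof.
move=> zn; have [->|z1] := eqVneq z 1.
  by under eq_bigr do rewrite expr1n; rewrite sumr_const card_ord.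
have : (z - 1) * \sum_(k < n) z ^+ k = 0 by rewrite -subrX1 zn subrr.
by move/eqP; rewrite mulf_eq0 subr_eq0 (negbTE z1) => /eqP.
Qed.

Lemma norm_unity_root (R : numDomainType) (z : R) n :
  (0 < n)%N -> z ^+ n = 1 -> `|z| = 1.
Proof.
by move=> n_gt0 zn; apply/eqP; rewrite -(pexpr_eq1 n_gt0) ?normr_ge0 // -normrX zn normr1.
Qed.

Lemma unity_root_mulJ (z : CC) n : (0 < n)%N -> z ^+ n = 1 -> z * z^*%C = 1.
Proof. by move=> n_gt0 zn; rewrite -sqr_normc (norm_unity_root n_gt0 zn) expr1n. Qed.

Lemma conj_prim_root n (z : CC) :
  n.-primitive_root z -> n.-primitive_root z^*%C.
Proof. by rewrite fmorph_primitive_root. Qed.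

Section Adjoint.
Variable n : nat.
Implicit Types A B : 'M[CC]_n.

Lemma adjmxD A B : adjmx (A + B) = adjmx A + adjmx B.
Proof. by apply/matrixP => i j; rewrite !mxE rmorphD. Qed.

Lemma adjmxZ (a : CC) A : adjmx (a *: A) = a^*%C *: adjmx A.
Proof. by apply/matrixP => i j; rewrite !mxE rmorphM. Qed.

Lemma adjmx1 : adjmx (1%:M : 'M[CC]_n) = 1%:M.
Proof. by apply/matrixP => i j; rewrite !mxE eq_sym rmorphMn rmorph1. Qed.

Lemma sa_projection_half_involution A :
  A *m A = 1%:M -> adjmx A = A -> sa_projection (2^-1 *: (1%:M + A)).
Proof.
move=> AA A_adj; split.
  rewrite -scalemxAl -scalemxAr scalerA mulmxDl !mulmxDr !mul1mx mulmx1 AA.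
  rewrite (addrC A) -mulr2n -scalerMnr scalerMnl; congr (_ *: _).
  by field.
by rewrite adjmxZ adjmxD adjmx1 A_adj conjc_inv conjc_nat.
Qed.

End Adjoint.

Section Fourier.
Variable n : nat.

Definition fourier_mx (u : CC) : 'M[CC]_n := \matrix_(j, k) u ^+ (j * k).

Lemma fourier_mulmx (u v : CC) : u ^+ n = 1 -> v ^+ n = 1 ->
  fourier_mx u *m fourier_mx v
    = \matrix_(j, l) (if u ^+ j * v ^+ l == 1 then n%:R else 0).
Proof.
move=> un vn; apply/matrixP => j l; rewrite !mxE -sum_expr_unity.
  apply: eq_bigr => k _; rewrite !mxE exprMn -!exprM.
  by rewrite [(l * k)%N]mulnC.
by rewrite exprMn -!exprM [(j * n)%N]mulnC [(l * n)%N]mulnC !exprM un vn !expr1n mulr1.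
Qed.

Lemma adjmx_fourier (u : CC) : adjmx (fourier_mx u) = fourier_mx u^*%C.
Proof. by apply/matrixP => j k; rewrite !mxE rmorphXn mulnC. Qed.

Lemma fourier_mulmx_conj (w : CC) : n.-primitive_root w ->
  fourier_mx w *m fourier_mx w^*%C = n%:R%:M.
Proof.
move=> w_prim; have wn := prim_expr_order w_prim.
have wJ := unity_root_mulJ (prim_order_gt0 w_prim) wn.
rewrite fourier_mulmx ?(prim_expr_order (conj_prim_root w_prim)) //.
apply/matrixP => j l; rewrite !mxE.
suff -> : (w ^+ j * w^*%C ^+ l == 1) = (j == l) by case: (j == l).
have wl : w ^+ l * w^*%C ^+ l = 1 by rewrite -exprMn wJ expr1n.
apply/eqP/eqP => [h|->//]; apply: val_inj; apply/eqP.
have : w ^+ j = w ^+ l by rewrite -[LHS]mulr1 -wl mulrA mulrAC h mul1r.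
by move/eqP; rewrite (eq_prim_root_expr w_prim) !modn_small.
Qed.

Lemma fourier_conj_sqr (w : CC) : w ^+ n = 1 ->
  fourier_mx w^*%C *m fourier_mx w^*%C = fourier_mx w *m fourier_mx w.
Proof.
move=> wn; have wJn : w^*%C ^+ n = 1 by rewrite -rmorphXn wn rmorph1.
rewrite !fourier_mulmx //; apply/matrixP => j l; rewrite !mxE.
by rewrite -!rmorphXn -rmorphM fmorph_eq1.
Qed.

End Fourier.

Definition hartley_coef : CC := Complex (2^-1) (- 2^-1).
Local Notation a := hartley_coef.

Lemma hartley_coef_sqr : a * a + a^*%C * a^*%C = 0.
Proof.
by apply/eqP; rewrite eq_complex /=; apply/andP; split; apply/eqP; ring.
Qed.

Lemma hartley_coef_mulJ : a * a^*%C + a^*%C * a = 1.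
Proof.
by apply/eqP; rewrite eq_complex /=; apply/andP; split; apply/eqP; [field | ring].
Qed.

Lemma norm_hartley_coef : `|a| <= 1.
Proof.
have a2 : `|a| ^+ 2 *+ 2 = 1 by rewrite sqr_normc mulr2n {2}mulrC hartley_coef_mulJ.
by rewrite -(expr_le1 (n := 2)) ?normr_ge0 // -a2 mulr2n lerDl exprn_ge0 ?normr_ge0.
Qed.

Section Hartley.
Variables (n : nat) (w : CC).
Hypothesis w_prim : n.-primitive_root w.

(* For w = exp(2 pi i / n) this is the discrete Hartley transform,
   H_jk = cos(2 pi jk / n) + sin(2 pi jk / n). *)
Definition hartley_mx : 'M[CC]_n := a *: fourier_mx n w + a^*%C *: fourier_mx n w^*%C.

Lemma adjmx_hartley : adjmx hartley_mx = hartley_mx.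
Proof. by rewrite adjmxD !adjmxZ !adjmx_fourier !conjcK addrC. Qed.

Lemma hartley_mx_sqr : hartley_mx *m hartley_mx = n%:R%:M.
Proof.
(* F_conj(w)^2 = F_w^2 and F_w F_conj(w) = F_conj(w) F_w = n I, so
   H^2 = (a^2 + conj(a)^2) F_w^2 + 2 |a|^2 n I = n I. *)
have wJ_prim := conj_prim_root w_prim.
rewrite /hartley_mx mulmxDl !mulmxDr -!scalemxAl -!scalemxAr !scalerA.
rewrite fourier_conj_sqr ?(prim_expr_order w_prim) // (fourier_mulmx_conj w_prim).
have := fourier_mulmx_conj wJ_prim; rewrite conjcK => ->.
rewrite [X in _ + X]addrC addrACA.
by rewrite -!scalerDl hartley_coef_sqr hartley_coef_mulJ scale0r add0r scale1r.
Qed.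

Lemma cabs_hartley_le (j k : 'I_n) : cabs (hartley_mx j k) <= 2.
Proof.
have w1 := norm_unity_root (prim_order_gt0 w_prim) (prim_expr_order w_prim).
rewrite cabs_le !mxE; apply: le_trans (ler_normD _ _) _.
rewrite !normrM !normrX !normcJ w1 expr1n !mulr1 rmorph_nat.
exact: lerD norm_hartley_coef norm_hartley_coef.
Qed.

Lemma hartley_mx_l1 : n%:R ^+ 2 <= 2 * mx_l1 hartley_mx.
Proof.
suff <- : \sum_(i < n) \sum_(j < n) cabs (hartley_mx i j) ^+ 2 = n%:R ^+ 2.
  exact: sum_cabs_sqr_le cabs_hartley_le.
apply: complexI; rewrite sum_cabs_sqrE adjmx_hartley hartley_mx_sqr mxtrace_scalar.
by rewrite rmorphXn rmorph_nat expr2 mulr_natr.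
Qed.

End Hartley.

Lemma sqrt_nat_sqr n : Num.sqrt (n%:R : RR) * Num.sqrt n%:R = n%:R.
Proof. by rewrite -expr2 sqr_sqrtr ?ler0n. Qed.

Section NormalizedHartley.
Variables (n : nat) (w : CC).
Hypothesis w_prim : n.-primitive_root w.

Local Notation sqrt_n := (Num.sqrt (n%:R : RR)).

Definition normalized_hartley_mx : 'M[CC]_n := (sqrt_n^-1)%:C%C *: hartley_mx n w.

Lemma normalized_hartley_sqr : normalized_hartley_mx *m normalized_hartley_mx = 1%:M.
Proof.
have n_neq0 : n%:R != 0 :> RR by rewrite pnatr_eq0 -lt0n (prim_order_gt0 w_prim).
have e : (sqrt_n^-1 * sqrt_n^-1 * n%:R)%:C%C = 1 by rewrite -invfM sqrt_nat_sqr mulVf.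
rewrite !rmorphM /= rmorph_nat in e.
by rewrite -scalemxAl -scalemxAr scalerA hartley_mx_sqr // -scalemx1 scalerA e scale1r.
Qed.

Lemma adjmx_normalized_hartley : adjmx normalized_hartley_mx = normalized_hartley_mx.
Proof. by rewrite adjmxZ conjc_real adjmx_hartley. Qed.

Lemma normalized_hartley_l1 : n%:R * sqrt_n <= 2 * mx_l1 normalized_hartley_mx.
Proof.
have s_gt0 : 0 < sqrt_n by rewrite sqrtr_gt0 ltr0n (prim_order_gt0 w_prim).
rewrite mx_l1Z cabs_real ger0_norm ?invr_ge0 ?(ltW s_gt0) // mulrCA ler_pdivlMl //.
by rewrite mulrCA sqrt_nat_sqr -expr2 hartley_mx_l1.
Qed.

End NormalizedHartley.

Theorem mainTheorem6 :
  exists n0 : nat, forall n : nat, (n0 <= n)%N ->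
    exists E : 'M[CC]_n, sa_projection E /\
      ~ calC ((((3 : RR) / Num.sqrt (n%:R : RR))%:C)%C *: (2%:R *: E - 1%:M)).
Proof.
exists 1%N => n n_gt0; have [w w_prim] := num_closed_prim_root_exists CC n_gt0.
have P2 := normalized_hartley_sqr w_prim.
have P_adj := adjmx_normalized_hartley n w.
exists (2^-1 *: (1%:M + normalized_hartley_mx n w)).
split; first exact: sa_projection_half_involution.
rewrite scalerA mulfV ?pnatr_eq0 // scale1r addrC addKr.
move/mx_l1_calC_le; rewrite mx_l1Z cabs_real ger0_norm ?divr_ge0 ?sqrtr_ge0 //.
have := normalized_hartley_l1 w_prim; set s := Num.sqrt _; set y := mx_l1 _ => lb ub.
have n_pos : (0 : RR) < n%:R by rewrite ltr0n.
have s_gt0 : 0 < s by rewrite sqrtr_gt0.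
have : 3 / s * (n%:R * s) <= 3 / s * (2 * y) by rewrite ler_pM2l ?divr_gt0.
rewrite (_ : 3 / s * (n%:R * s) = 3 * n%:R); last by field; rewrite gt_eqF.
rewrite mulrCA; lra.
Qed.
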